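(* Let $R$ be a finite group and let $\varphi$ be an automorphism of $R$ with $|R:C_R(\varphi)|=2$. Then one of the following holds: (1) $\frac14\left(|R|+|\mathbf{I}(R)|+|C_R(\varphi)|+|C_R(\varphi)^{-1}|\right)\le \mathbf{c}(R)-\frac{|R|}{32}$; (2) $A:=C_R(\varphi)$ is abelian of exponent greater than $2$, and there is $x\in R\setminus A$ with $x^2$ an involution of $A$ and $xax^{-1}=a^{-1}$ for all $a\in A$ (so $R=\langle A,x\rangle\cong \mathrm{Dic}(A,x^2,x)$ is generalized dicyclic over $A$), and $\varphi=\bar\iota_A$; (3) $R$ is abelian of exponent greater than $2$ and $\varphi=\iota$.
   Context: $\mathbf{I}(R)=\{x\in R\mid x^2=1\}$, $\mathbf{c}(R)=(|R|+|\mathbf{I}(R)|)/2$. For an automorphism $\varphi$: $C_R(\varphi)=\{x\in R\mid x^\varphi=x\}$ and $C_R(\varphi)^{-1}=\{x\in R\mid x^\varphi=x^{-1}\}$. $\iota:R\to R$ is the map $x\mapsto x^{-1}$. Generalized dicyclic: for $A$ abelian of even order and exponent $>2$ and $y$ an involution of $A$, $\mathrm{Dic}(A,y,x)=\langle A,x\mid x^2=y,\ x^{-1}ax=a^{-1}\ \forall a\in A\rangle$. For such a group, $\bar\iota_A$ is the automorphism with $a^{\bar\iota_A}=a$ and $(ax)^{\bar\iota_A}=ax^{-1}$ for all $a\in A$. *)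

From HB Require Import structures.
From mathcomp Require Import all_boot all_order all_algebra all_fingroup all_solvable.
Set Implicit Arguments. Unset Strict Implicit. Unset Printing Implicit Defensive.
Import GRing.Theory Num.Theory.

Definition invols (gT : finGroupType) (R : {set gT}) : {set gT} :=
  [set x in R | (x ^+ 2 == 1)%g].

Definition cR (gT : finGroupType) (R : {set gT}) : rat :=
  ((#|R| + #|invols R|)%:R / 2)%R.

Definition centA (gT : finGroupType) (R : {set gT}) (phi : {perm gT}) : {set gT} :=
  [set x in R | phi x == x].

Definition centAinv (gT : finGroupType) (R : {set gT}) (phi : {perm gT}) : {set gT} :=
  [set x in R | phi x == (x^-1)%g].

(* Write A = C_R(phi), B = C_R(phi)^{-1} and I = I(R). Since |R| = 2|A| and the
   elements of B fixed by phi are involutions, if (1) fails then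
   |B \ A| > 3|A|/4 + |I \ A|. For x in B \ A, the coset B \ A is T x, where T is
   the set of a in A with x a x^-1 = a^-1. A subset of A of size > 3|A|/4 inverted
   by one element forces A to be abelian and inverted by that element, so
   B \ A = A x = R \ A. Then x^2 is an element of A with x^4 = 1, and x^2 <> 1,
   for otherwise R \ A would consist of involutions. Finally (2) or (3) holds
   according as the exponent of A exceeds 2 or not. *)

From mathcomp Require Import all_boot all_algebra all_fingroup all_solvable.
From mathcomp Require Import zify lra.
Import GRing.Theory Num.Theory.

Set Implicit Arguments.
Unset Strict Implicit.
Unset Printing Implicit Defensive.

Local Open Scope group_scope.

Lemma subgroup_card_gt_half_eq (gT : finGroupType) (G H : {group gT}) :
  H \subset G -> (#|G| < 2 * #|H|)%N -> H :=: G.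
Proof.
move=> sHG ltG; apply: index1g => //.
by have := Lagrange sHG; have := indexg_gt0 G H; nia.
Qed.

Lemma exponent_le2P (gT : finGroupType) (G : {group gT}) :
  reflect (forall g, g \in G -> g ^+ 2 = 1) (exponent G <= 2)%N.
Proof.
apply: (iffP idP) => [le2 | G2]; last exact/dvdn_leq/exponentP.
apply/exponentP; have := exponent_gt0 G.
by case: (exponent G) le2 => [|[|[|]]].
Qed.

Section IndexTwo.
Variables (gT : finGroupType) (G H : {group gT}).
Hypotheses (sHG : H \subset G) (iHG : #|G : H| = 2).

Lemma index2_mem_rcoset x y : x \in G :\: H -> (y \in G :\: H) = (y * x^-1 \in H).
Proof. by move=> xGH; rewrite -(rcoset_index2 sHG iHG xGH) mem_rcoset. Qed.

Lemma index2_sqr_mem x : x \in G :\: H -> x ^+ 2 \in H.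
Proof.
move=> xGH; have /setDP[xG xH] := xGH.
have [//|x2H] := boolP (x ^+ 2 \in H).
have : x ^+ 2 \in G :\: H by rewrite inE x2H groupX.
by rewrite (index2_mem_rcoset _ xGH) expg2 mulgK (negbTE xH).
Qed.

Lemma index2_joing_cycle x : x \in G :\: H -> H <*> <[x]> = G.
Proof.
case/setDP=> xG xH; set K := H <*> <[x]>.
have sKG : K \subset G by rewrite join_subG sHG cycle_subG.
have sHK : H \subset K := joing_subl H <[x]>.
have ltHK : (1 < #|K : H|)%N.
  rewrite indexg_gt1; apply: contra xH => /subsetP; apply.
  by rewrite mem_gen // inE cycle_id orbT.
have := Lagrange_index sKG sHK; rewrite iHG => iGK.
apply: index1g => //; have := indexg_gt0 G K.
by move: iGK ltHK; set a := #|G : K|; set b := #|K : H|; nia.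
Qed.

End IndexTwo.

Definition inverted_by (gT : finGroupType) (A : {set gT}) (x : gT) : {set gT} :=
  [set a in A | a ^ x == a^-1].

Lemma conj_inv_commute (gT : finGroupType) (x a b : gT) :
  a ^ x = a^-1 -> b ^ x = b^-1 -> (a * b) ^ x = (a * b)^-1 -> commute a b.
Proof.
by move=> ax bx; rewrite conjMg ax bx invMg => e; apply: invg_inj; rewrite !invMg e.
Qed.

Lemma sqr_mul_conj_inv (gT : finGroupType) (a x : gT) :
  a ^ x^-1 = a^-1 -> (a * x) ^+ 2 = x ^+ 2.
Proof.
rewrite conjgE invgK expg2 => xax; rewrite expg2.
have -> : a * x * (a * x) = a * (x * (a * x^-1)) * (x * x) by rewrite !mulgA mulgKV.
by rewrite xax mulgV mul1g.
Qed.

Section LargeInvertedSet.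
Variables (gT : finGroupType) (A : {group gT}) (x : gT).
Local Notation T := (inverted_by A x).

Lemma inverted_by_sub : T \subset A.
Proof. by apply/subsetP=> a; rewrite inE => /andP[]. Qed.

Lemma card_inverted_by_cent1 g : g \in T -> (2 * #|T| <= #|A| + #|'C_A[g]|)%N.
Proof.
rewrite inE => /andP[gA /eqP gx].
have sTgTC : T :&: g^-1 *: T \subset 'C_A[g].
  apply/subsetP=> h /setIP[hT]; rewrite mem_lcoset invgK => ghT.
  rewrite !inE in hT ghT; move: hT ghT => /andP[hA /eqP hx] /andP[_ /eqP ghx].
  by rewrite inE hA; apply/cent1P/commute_sym/(conj_inv_commute gx hx ghx).
have sTgTA : T :|: g^-1 *: T \subset A.
  apply/subsetP=> h; rewrite inE mem_lcoset invgK.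
  by case/orP=> /(subsetP inverted_by_sub) //; rewrite groupMl.
rewrite mul2n -addnn -{2}(card_lcoset T g^-1) -(cardsUI T).
by apply: leq_add; apply: subset_leq_card.
Qed.

Hypothesis large_T : (3 * #|A| < 4 * #|T|)%N.

Lemma large_inverted_by_center : T \subset 'Z(A).
Proof.
apply/subsetP=> g Tg; have /(subsetP inverted_by_sub) gA := Tg.
have CAg : 'C_A[g] :=: A.
  apply: subgroup_card_gt_half_eq; first exact: subsetIl.
  by have := card_inverted_by_cent1 Tg; move: large_T; set c := #|_ :&: _|; lia.
by rewrite inE gA -sub_cent1 -CAg subsetIr.
Qed.

Lemma large_inverted_by_abelian : abelian A.
Proof.
apply/center_idP/subgroup_card_gt_half_eq; first exact: center_sub.
have := subset_leq_card large_inverted_by_center.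
by move: large_T; set z := #|'Z(_)|; lia.
Qed.

Lemma large_inverted_by_all : {in A, forall a, a ^ x = a^-1}.
Proof.
have groupT : group_set T.
  apply/group_setP; split=> [|g h]; first by rewrite inE group1 conj1g invg1 eqxx.
  rewrite !inE => /andP[gA /eqP gx] /andP[hA /eqP hx].
  rewrite groupM //= conjMg gx hx -invMg.
  by rewrite (centsP large_inverted_by_abelian g gA h hA).
have TA : Group groupT :=: A.
  apply: subgroup_card_gt_half_eq; first exact: inverted_by_sub.
  by move: large_T; rewrite /=; set t := #|inverted_by _ _|; lia.
by move=> a; rewrite -TA inE => /andP[_ /eqP].
Qed.

End LargeInvertedSet.

Lemma ler_quarter_sum_of_nat (n i a b : nat) : (8 * a + 8 * b + n <= 8 * n + 8 * i)%N ->
  ((n + i + a + b)%:R / 4 <= (n + i)%:R / 2 - n%:R / 32 :> rat)%R.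
Proof. by rewrite -(ler_nat rat) !natrD; lra. Qed.

Section IndexTwoFixedPoints.
Variables (gT : finGroupType) (R : {group gT}) (phi : {perm gT}).

Local Notation A := (centA R phi).
Local Notation B := (centAinv R phi).
Local Notation I := (invols R).

Lemma centA_sub : A \subset R.
Proof. by apply/subsetP=> u; rewrite inE => /andP[]. Qed.

Lemma centAinv_outside_sub : B :\: A \subset R :\: A.
Proof. by apply/subsetP=> y; rewrite !inE => /andP[-> /andP[-> _]]. Qed.

Lemma centAinv_centA_sub_invols : B :&: A \subset I :&: A.
Proof.
rewrite subsetI subsetIr andbT; apply/subsetP=> u.
rewrite !inE => /andP[/andP[uR /eqP phiu] /andP[_ /eqP phiu']].
by rewrite uR expg2 -eq_invg_mul -phiu phiu' eqxx.
Qed.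

Hypothesis AutR_phi : phi \in Aut R.

Let phiM : {in R &, {morph phi : u v / u * v}} := morphicP (Aut_morphic AutR_phi).

Lemma group_set_centA : group_set A.
Proof.
apply/group_setP; split=> [|u v].
  by rewrite inE group1 -(autmE AutR_phi) morph1 eqxx.
rewrite !inE => /andP[uR /eqP phiu] /andP[vR /eqP phiv].
by rewrite groupM // phiM // phiu phiv eqxx.
Qed.

Canonical centA_group := Group group_set_centA.

Hypothesis iRA : #|R : A| = 2.

Lemma card_centAinv_outside :
    (8 * #|R| + 8 * #|I| < 8 * #|A| + 8 * #|B| + #|R|)%N ->
  (6 * #|A| + 8 * #|I :\: A| < 8 * #|B :\: A|)%N.
Proof.
have := Lagrange centA_sub; rewrite iRA.
have := subset_leq_card centAinv_centA_sub_invols.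
have := cardsID A B; have := cardsID A I.
by set a := #|gval _|; lia.
Qed.

Variable x : gT.
Hypothesis BAx : x \in B :\: A.

Let RAx : x \in R :\: A := subsetP centAinv_outside_sub x BAx.

Lemma phi_centA_mul : {in A, forall a, phi (a * x) = a * x^-1}.
Proof.
move: BAx; rewrite !inE => /andP[_ /andP[xR /eqP phix]] a /setIdP[aR /eqP phia].
by rewrite phiM // phia phix.
Qed.

Lemma mem_centAinv_mul a : a \in A -> (a * x \in B) = (a ^ x^-1 == a^-1).
Proof.
move=> Aa; have /setIdP[aR _] := Aa; have /setDP[/setIdP[xR _] _] := BAx.
rewrite inE groupM // phi_centA_mul // invMg conjgE invgK.
by rewrite -(inj_eq (mulgI x)) mulKVg.
Qed.

Lemma centAinv_outside_rcoset : B :\: A = inverted_by A x^-1 :* x.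
Proof.
apply/setP=> y; rewrite mem_rcoset.
have [RAy | RAy] := boolP (y \in R :\: A); last first.
  rewrite (contraNF (subsetP centAinv_outside_sub y)) //; apply/esym/negbTE.
  apply: contra RAy; rewrite (index2_mem_rcoset centA_sub iRA _ RAx).
  exact/subsetP/inverted_by_sub.
have Ayx := RAy; rewrite (index2_mem_rcoset centA_sub iRA _ RAx) in Ayx.
case/setDP: RAy => _ yA; rewrite [in RHS]inE Ayx -mem_centAinv_mul // mulgKV.
by rewrite inE yA.
Qed.

Hypothesis large : (6 * #|A| + 8 * #|I :\: A| < 8 * #|B :\: A|)%N.

Lemma centA_inverted : abelian A /\ {in A, forall a, a ^ x^-1 = a^-1}.
Proof.
have large_T : (3 * #|A| < 4 * #|inverted_by A x^-1|)%N.
  by move: large; rewrite centAinv_outside_rcoset card_rcoset; lia.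
split; first exact: large_inverted_by_abelian large_T.
exact: large_inverted_by_all large_T.
Qed.

Lemma centAinv_outside_eq : B :\: A = R :\: A.
Proof.
rewrite centAinv_outside_rcoset -(rcoset_index2 centA_sub iRA RAx); congr (_ :* x).
have [_ Ainv] := centA_inverted.
by apply/setP=> a; rewrite inE andb_idr // => /Ainv ->.
Qed.

Lemma sqr_centAinv_outside_mem : x ^+ 2 \in A.
Proof. exact: (index2_sqr_mem centA_sub iRA RAx). Qed.

Lemma sqr_centAinv_outside_invol : (x ^+ 2) ^+ 2 = 1.
Proof.
have /setIdP[x2R /eqP phix2] := sqr_centAinv_outside_mem.
move: BAx; rewrite !inE => /andP[_ /andP[xR /eqP phix]].
by rewrite {1}expg2 -{1}phix2 expg2 phiM // phix -invMg mulVg.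
Qed.

Lemma sqr_centAinv_outside_neq1 : x ^+ 2 != 1.
Proof.
apply/eqP=> x2_1.
have sRAI : R :\: A \subset I :\: A.
  apply/subsetP=> y RAy; have /setDP[yR yA] := RAy; rewrite in_setD yA inE yR /=.
  have [_ Ainv] := centA_inverted.
  rewrite (index2_mem_rcoset centA_sub iRA _ RAx) in RAy.
  by rewrite -(mulgKV x y) sqr_mul_conj_inv ?Ainv // x2_1.
apply/negP: large; rewrite -leqNgt centAinv_outside_eq.
by rewrite (leq_trans _ (leq_addl _ _)) // leq_mul2l subset_leq_card.
Qed.

Lemma centA_exponent_le2 : (exponent A <= 2)%N ->
  [/\ abelian R, (2 < exponent R)%N & {in R, forall r, phi r = r^-1}].
Proof.
move/exponent_le2P=> A2; have [abA Ainv] := centA_inverted.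
have Ainv1 a : a \in A -> a^-1 = a by move=> Aa; apply/eqP; rewrite eq_invg_mul -expg2 A2.
have /setDP[xR xA] := RAx; split.
- rewrite -(index2_joing_cycle centA_sub iRA RAx) abelianY abA cycle_abelian.
  rewrite cycle_subG /=.
  apply/centP=> a Aa; have := Ainv a Aa; rewrite (Ainv1 a Aa) conjgE invgK => xax.
  by rewrite /commute -{2}xax !mulgA mulgKV.
- by rewrite ltnNge; apply: contra sqr_centAinv_outside_neq1 => /exponent_le2P ->.
move=> r Rr; have [Ar | Ar] := boolP (r \in A).
  by have /setIdP[_ /eqP ->] := Ar; rewrite Ainv1.
have : r \in B :\: A by rewrite centAinv_outside_eq inE Ar.
by rewrite !inE => /andP[_ /andP[_ /eqP]].
Qed.

End IndexTwoFixedPoints.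

Theorem lemma2p2 (gT : finGroupType) (R : {group gT}) (phi : {perm gT}) :
  phi \in Aut R ->
  (#|R : centA R phi|)%g = 2%N ->
  [\/ ((#|R| + #|invols R| + #|centA R phi| + #|centAinv R phi|)%:R / 4
        <= cR R - #|R|%:R / 32 :> rat)%R,
      [/\ abelian (centA R phi), (2 < exponent (centA R phi))%N &
        exists2 x, x \in R :\: centA R phi &
          [/\ (x ^+ 2 \in centA R phi)%g, (x ^+ 2 != 1)%g, ((x ^+ 2) ^+ 2 == 1)%g,
              (forall a, a \in centA R phi -> x * a * x^-1 = a^-1)%g &
              (forall a, a \in centA R phi -> phi (a * x)%g = (a * x^-1)%g)]]
    | [/\ abelian R, (2 < exponent R)%N & forall r, r \in R -> phi r = (r^-1)%g]].
Proof.
move=> AutR_phi iRA; set A := centA R phi; set B := centAinv R phi.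
have [small | /(card_centAinv_outside AutR_phi iRA) large] :=
  leqP (8 * #|A| + 8 * #|B| + #|R|) (8 * #|R| + 8 * #|invols R|).
  by apply: Or31; apply: ler_quarter_sum_of_nat.
have [x BAx] : exists x, x \in B :\: A.
  by apply/set0Pn; apply: contraTneq large => ->; rewrite cards0.
have [abA Ainv] := centA_inverted AutR_phi iRA BAx large.
have [eA | eA] := leqP (exponent A) 2.
  by apply: Or33; exact: (centA_exponent_le2 AutR_phi iRA BAx large eA).
apply: Or32; split => //; exists x.
  exact: (subsetP (centAinv_outside_sub R phi) x BAx).
split.
- exact: (sqr_centAinv_outside_mem AutR_phi iRA BAx).
- exact: (sqr_centAinv_outside_neq1 AutR_phi iRA BAx large).
- exact/eqP/(sqr_centAinv_outside_invol AutR_phi iRA BAx).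
- by move=> a Aa; rewrite -mulgA -{1}(invgK x) -conjgE Ainv.
- exact: (phi_centA_mul AutR_phi BAx).
Qed.
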